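(* In the setting below, let $\Omega$ have the inner $\epsilon$-ball property for some $\epsilon>0$, let $0<m\le f_\mu\le M<\infty$ on $\Omega$, let $p>n$, $p\ge4$ with $M_p:=\int|x|^pd\nu<\infty$, and let $q$ satisfy $\frac1p+\frac1q=1$. Assume that $\phi_\mu$ and all $\phi_{\mu;R}$ are Hölder continuous on $\Omega$ with exponent $1-\frac np$ and a common constant $C_H$ (as holds under these assumptions by a result of Berman–Berndtsson), and that $\|\phi_{\mu;R}-\phi_\mu\|_{L^1(\Omega)}\le h(R)$ with $h(R)\to0$ as $R\to\infty$. Then there exist $R_0>0$ and $C=C(n,p,\Omega,m,M,C_H)$ such that for all $R\ge R_0$, $$\max_{x\in\Omega}|\phi_{\mu;R}(x)-\phi_\mu(x)|\le C\,h(R)^{\frac{1-n/p}{1+n/q}}.$$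
   Context: Setting: $\Omega\subset\mathbb{R}^n$ compact convex with nonempty interior; $\mu$ a probability measure with density $f_\mu$, $\mathrm{spt}(\mu)=\Omega$; $\nu$ a probability measure on $\mathbb{R}^n$ with a density and finite second moment; $\nu_R(E):=\nu(E\cap B_R(0))/\nu(B_R(0))$. Cost $\frac12|x-y|^2$. $\phi_\mu$ ($\phi_{\mu;R}$) is the Brenier potential for $\mu\to\nu$ ($\mu\to\nu_R$): convex, whose gradient is the optimal transport map $\mu$-a.e.; constants fixed by $\int_\Omega\phi_\mu\,dx=\int_\Omega\phi_{\mu;R}\,dx=0$. A closed set $A$ has the inner $\epsilon$-ball property if there is a set $A'$ with $A=\bigcup_{x\in A'}\overline{B_\epsilon(x)}$. *)

From HB Require Import structures.
From mathcomp Require Import all_boot all_order all_algebra.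
From mathcomp Require Import all_classical all_reals all_analysis.
Set Implicit Arguments. Unset Strict Implicit. Unset Printing Implicit Defensive.
Import Order.TTheory GRing.Theory Num.Theory.
Import numFieldNormedType.Exports.
Local Open Scope classical_set_scope.
Local Open Scope ring_scope.

Section Defs.
Variables (R : realType) (n : nat).

Definition pt := 'rV[R]_n.

Definition enorm (x : pt) : R := Num.sqrt (\sum_(i < n) x ord0 i ^+ 2).

Definition cball (c : pt) (r : R) : set pt := [set x | enorm (x - c) <= r].
Definition oball (c : pt) (r : R) : set pt := [set x | enorm (x - c) < r].

Definition borel := g_sigma_algebraType (@open pt).

(* lam is the (Borel) Lebesgue measure on R^n: the measure on Borel sets
   giving each closed box its volume (this determines it uniquely). *)
Definition box (a b : pt) : set pt := [set x | forall i, a ord0 i <= x ord0 i <= b ord0 i].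
Definition is_lebesgue (lam : {measure set borel -> \bar R}) : Prop :=
  forall a b : pt, (forall i, a ord0 i <= b ord0 i) ->
    lam (box a b) = (\prod_(i < n) (b ord0 i - a ord0 i))%:E.

Definition convex_on (A : set pt) (f : pt -> R) : Prop :=
  forall x y t, A x -> A y -> 0 <= t <= 1 ->
    f ((1 - t) *: x + t *: y) <= (1 - t) * f x + t * f y.

Definition inner_ball_property (A : set pt) (eps : R) : Prop :=
  closed A /\ exists A' : set pt, A = \bigcup_(x in A') cball x eps.

Definition msupport (mu : {measure set borel -> \bar R}) : set pt :=
  [set x | forall U : set pt, open U -> U x -> (0 < mu (U : set borel))%E].

Definition has_density (lam mu : {measure set borel -> \bar R}) (f : pt -> R) : Prop :=
  (forall x, 0 <= f x) /\ measurable_fun [set: borel] (f : borel -> R) /\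
  forall A : set borel, measurable A -> mu A = (\int[lam]_(x in A) (f x)%:E)%E.

Definition is_probability (mu : {measure set borel -> \bar R}) : Prop :=
  mu [set: borel] = 1%E.

Definition grad (f : pt -> R) (x : pt) : pt :=
  \row_(i < n) ('D_(delta_mx ord0 i : pt) f x).

Definition pushes (mu : {measure set borel -> \bar R}) (nu : set borel -> \bar R)
    (S : pt -> pt) : Prop :=
  measurable_fun [set: borel] (S : borel -> borel) /\
  forall B : set borel, measurable B -> mu ((S : borel -> borel) @^-1` B) = nu B.

Definition cost (mu : {measure set borel -> \bar R}) (S : pt -> pt) : \bar R :=
  (\int[mu]_(x in [set: borel]) ((enorm (x - S x) ^+ 2) / 2)%:E)%E.

Definition optimal_map (mu : {measure set borel -> \bar R}) (nu : set borel -> \bar R)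
    (T : pt -> pt) : Prop :=
  pushes mu nu T /\ forall S, pushes mu nu S -> (cost mu T <= cost mu S)%E.

Definition brenier (Omega : set pt) (mu : {measure set borel -> \bar R})
    (nu : set borel -> \bar R) (phi : pt -> R) : Prop :=
  convex_on Omega phi /\
  exists T, optimal_map mu nu T /\
    {ae mu, forall x : borel, differentiable phi x /\ T x = grad phi x}.

Definition restr (nu : {measure set borel -> \bar R}) (r : R) : set borel -> \bar R :=
  fun E => (fine (nu (E `&` (oball 0 r : set borel))) / fine (nu (oball 0 r : set borel)))%:E.

Definition holder_on (A : set pt) (f : pt -> R) (alpha CH : R) : Prop :=
  forall x y, A x -> A y -> `|f x - f y| <= CH * (enorm (x - y)) `^ alpha.

End Defs.

From HB Require Import structures.
From mathcomp Require Import all_boot all_order all_algebra.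
From mathcomp Require Import all_classical all_reals all_analysis.
From mathcomp Require Import ring lra.
Import Order.TTheory GRing.Theory Num.Theory.
Import numFieldNormedType.Exports.
Local Open Scope classical_set_scope.
Local Open Scope ring_scope.

Set Implicit Arguments.
Unset Strict Implicit.

(* Both potentials are alpha-Hoelder on Omega with constant C_H, alpha = 1 - n/p,
   so their difference f is alpha-Hoelder with constant 2 C_H.  If |f x0| = d,
   then |f| >= d/2 on the ball of radius rho ~ d^(1/alpha) around x0, and the
   inner eps-ball property puts a cube of volume c rho^n inside Omega and this
   ball as long as rho <= eps.  Hence h(R) >= ||f||_1 >= c d rho^n, which is of
   order d^((alpha + n)/alpha), and alpha / (alpha + n) is the exponent of the
   statement because 1/p + 1/q = 1.  For R large, h(R) is too small for
   rho > eps to be possible. *)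

Section Euclidean.
Variables (R : realType) (n : nat).
Implicit Types (x y u v c : pt R n) (r s t : R).

Lemma enorm_ge0 x : 0 <= enorm x.
Proof. exact: sqrtr_ge0. Qed.

Lemma enorm_sq x : enorm x ^+ 2 = \sum_(i < n) x ord0 i ^+ 2.
Proof. by rewrite sqr_sqrtr // sumr_ge0 // => i _; rewrite sqr_ge0. Qed.

Lemma enorm_le_sq x r : 0 <= r -> (enorm x <= r) = (enorm x ^+ 2 <= r ^+ 2).
Proof. by move=> r0; rewrite ler_sqr ?nnegrE ?enorm_ge0. Qed.

Lemma enormZ_sq t x : enorm (t *: x) ^+ 2 = t ^+ 2 * enorm x ^+ 2.
Proof.
by rewrite !enorm_sq mulr_sumr; apply: eq_bigr => i _; rewrite mxE exprMn.
Qed.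

Lemma enorm_convex_sq t u v : 0 <= t <= 1 ->
  enorm ((1 - t) *: u + t *: v) ^+ 2 <= (1 - t) * enorm u ^+ 2 + t * enorm v ^+ 2.
Proof.
move=> /andP[t0 t1]; rewrite !enorm_sq !mulr_sumr -big_split ler_sum // => i _.
have t1' : 0 <= 1 - t by rewrite subr_ge0.
have := mulr_ge0 (mulr_ge0 t0 t1') (sqr_ge0 (u ord0 i - v ord0 i)).
by rewrite /= !mxE; nra.
Qed.

Lemma enormD_sq u v : enorm (u + v) ^+ 2 <= 2 * enorm u ^+ 2 + 2 * enorm v ^+ 2.
Proof.
rewrite !enorm_sq !mulr_sumr -big_split ler_sum // => i _.
by rewrite /= !mxE; have := sqr_ge0 (u ord0 i - v ord0 i); nra.
Qed.

Lemma continuous_enormB c : continuous (fun x => enorm (x - c)).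
Proof.
move=> x; apply: continuous_comp (@sqrt_continuous _ _).
apply: (continuous_big add_continuous) => i _.
have -> : (fun x : pt R n => (x - c) ord0 i ^+ 2) =
    (fun t => t ^+ 2) \o (fun x => x ord0 i - c ord0 i).
  by apply: funext => z; rewrite !mxE.
move=> y; apply: continuous_comp (@exprn_continuous _ 2 _).
by apply: continuousB; [exact: coord_continuous | exact: cst_continuous].
Qed.

Lemma measurable_open (A : set (pt R n)) :
  open A -> measurable (A : set (borel R n)).
Proof. exact: sub_sigma_algebra. Qed.

Lemma measurable_oball c r : measurable (oball c r : set (borel R n)).
Proof.
apply: measurable_open; apply: open_comp (@open_lt _ r) => x _.
exact: continuous_enormB.
Qed.

Lemma measurable_box a b : measurable (box a b : set (borel R n)).
Proof.
have -> : (box a b : set (borel R n)) = ~` (~` box a b) by rewrite setCK.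
apply: measurableC; apply: measurable_open; apply: closed_openC.
have -> : box a b = \bigcap_(i in [set: 'I_n])
    ((fun x : pt R n => x ord0 i) @^-1` `[a ord0 i, b ord0 i]).
  apply/seteqP; split => x /= Hx i; first by move=> _; rewrite /= in_itv; exact: Hx.
  by have := Hx i I; rewrite /= in_itv.
apply: closed_bigI => i _; apply: closed_comp (@itv_closed _ _ _ _) => x _.
exact: coord_continuous.
Qed.

Definition centered_box y s : set (pt R n) :=
  box (\row_i (y ord0 i - s)) (\row_i (y ord0 i + s)).

Lemma measure_centered_box (lam : {measure set (borel R n) -> \bar R}) y s :
  is_lebesgue lam -> 0 <= s ->
  lam (centered_box y s : set (borel R n)) = ((2 * s) ^+ n)%:E.
Proof.
move=> lamE s0; rewrite lamE; last by move=> i; rewrite !mxE; lra.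
rewrite (eq_bigr (fun _ => 2 * s)) ?prodr_const ?card_ord // => i _.
by rewrite !mxE; ring.
Qed.

Lemma enormB_centered_box_sq y s x :
  centered_box y s x -> enorm (x - y) ^+ 2 <= n%:R * s ^+ 2.
Proof.
move=> xB; rewrite enorm_sq mulr_natl -[n in _ *+ n]card_ord -sumr_const.
apply: ler_sum => i _; have /andP[] := xB i; rewrite !mxE => lo hi; nra.
Qed.

Lemma centered_box_sub_cap c x0 eps rho :
  0 < rho -> rho <= eps -> enorm (x0 - c) <= eps ->
  centered_box (x0 - (rho / (2 * eps)) *: (x0 - c)) (rho / (4 * (n%:R + 1)))
  `<=` cball c eps `&` cball x0 rho.
Proof.
move=> rho0 rhoe x0c; have eps0 : 0 < eps by apply: lt_le_trans rhoe.
set t := rho / (2 * eps); set s := rho / (4 * (n%:R + 1)).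
have n1 : 0 < n%:R + 1 :> R by rewrite ltr_wpDl.
have tE : t * (2 * eps) = rho by rewrite mulfVK // gt_eqF // mulr_gt0.
have sE : s * (4 * (n%:R + 1)) = rho by rewrite mulfVK // gt_eqF // mulr_gt0.
have t0 : 0 < t by rewrite divr_gt0 // mulr_gt0.
have t_le : t <= 1 / 2 by nra.
have box_small : n%:R * s ^+ 2 <= rho ^+ 2 / 16 by rewrite -sE; nra.
clearbody t s; set y := x0 - t *: (x0 - c).
move=> x /enormB_centered_box_sq xy.
have x0cE : enorm (x0 - c) ^+ 2 <= eps ^+ 2 by rewrite -enorm_le_sq // ltW.
split; rewrite /cball /=.
- rewrite enorm_le_sq ?(ltW eps0) //.
  have -> : x - c = (1 - t) *: (x0 - c) + t *: (t^-1 *: (x - y)).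
    by apply/rowP => i; rewrite !mxE; field; rewrite gt_eqF.
  apply: le_trans (enorm_convex_sq _ _ _) _; first by apply/andP; split; lra.
  rewrite enormZ_sq.
  have -> : t * (t^-1 ^+ 2 * enorm (x - y) ^+ 2) = enorm (x - y) ^+ 2 / t.
    by field; rewrite gt_eqF.
  have : enorm (x - y) ^+ 2 / t <= t * eps ^+ 2 by rewrite ler_pdivrMr //; nra.
  nra.
- rewrite enorm_le_sq ?(ltW rho0) //.
  have -> : x - x0 = (x - y) + (- t) *: (x0 - c).
    by apply/rowP => i; rewrite !mxE; ring.
  apply: le_trans (enormD_sq _ _) _; rewrite enormZ_sq sqrrN; nra.
Qed.

(* The cube of half-side rho / (4 (n + 1)) found by [centered_box_sub_cap]
   has volume cap_volume_const * rho ^ n. *)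
Definition cap_volume_const : R := ((2 * (n%:R + 1)) ^+ n)^-1.

Lemma cap_volume_const_gt0 : 0 < cap_volume_const.
Proof. by rewrite invr_gt0 exprn_gt0 // mulr_gt0 // ltr_wpDl. Qed.

End Euclidean.

(* No measurability is required: the integrands below are built from the
   Brenier potentials, which are not assumed measurable. *)
Lemma ge0_le_integral_subset d (T : measurableType d) (R : realType)
    (mu : {measure set T -> \bar R}) (A B : set T) (f g : T -> \bar R) :
  A `<=` B -> (forall x, A x -> (0 <= f x)%E) -> (forall x, B x -> (0 <= g x)%E) ->
  (forall x, A x -> (f x <= g x)%E) ->
  (\int[mu]_(x in A) f x <= \int[mu]_(x in B) g x)%E.
Proof.
move=> AB f0 g0 fg; rewrite !ge0_integralE //.
apply: ereal_sup_le => _ [h hf <-]; exists h => //= x.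
apply: le_trans (hf x) _; rewrite /patch; case: ifPn => [xA|_].
  rewrite inE in xA; rewrite ifT ?inE; [exact: fg | exact: AB].
by case: ifPn => // /[!inE] /g0.
Qed.

Lemma exists_oball_measure_gt0 (R : realType) (n : nat)
    (nu : {measure set (borel R n) -> \bar R}) (c : pt R n) :
  (0 < nu [set: borel R n])%E ->
  exists r : R, 0 < r /\ (0 < nu (oball c r : set (borel R n)))%E.
Proof.
move=> nuT; apply/not_existsP => nu0.
have cover : [set: borel R n] `<=` \bigcup_i (oball c i.+1%:R : set (borel R n)).
  move=> x _; exists (Num.bound (enorm (x - c))) => //=.
  by apply: lt_trans (archi_boundP (enorm_ge0 _)) _; rewrite ltr_nat.
have := @measure_sigma_subadditive _ _ _ nu [set: borel R n]
  (fun i => oball c i.+1%:R : set (borel R n)) (fun i => measurable_oball c i.+1%:R)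
  measurableT cover.
rewrite eseries0 ?leNgt ?nuT // => i _ _; apply/eqP; rewrite eq_le measure_ge0 andbT.
by rewrite leNgt; apply/negP => nui; apply: (nu0 i.+1%:R); split.
Qed.

Section Holder.
Variables (R : realType) (n : nat).
Implicit Types (A : set (pt R n)) (f g : pt R n -> R).

Lemma holder_onB A f g a C1 C2 : holder_on A f a C1 -> holder_on A g a C2 ->
  holder_on A (f \- g) a (C1 + C2).
Proof.
move=> Hf Hg x y Ax Ay; rewrite mulrDl.
have -> : f x - g x - (f y - g y) = (f x - f y) - (g x - g y) by ring.
by apply: le_trans (ler_normB _ _) _; apply: lerD; [exact: Hf | exact: Hg].
Qed.

Lemma holder_on_le A f a C1 C2 :
  C1 <= C2 -> holder_on A f a C1 -> holder_on A f a C2.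
Proof.
move=> C12 Hf x y Ax Ay; apply: le_trans (Hf x y Ax Ay) _.
by apply: ler_wpM2r => //; exact: powR_ge0.
Qed.

Lemma holder_abs_ge_half A f a L x0 rho :
  0 <= a -> 0 <= L -> holder_on A f a L -> A x0 -> L * rho `^ a <= `|f x0| / 2 ->
  forall x, A x -> enorm (x - x0) <= rho -> `|f x0| / 2 <= `|f x|.
Proof.
move=> a0 L0 Hf Ax0 Lrho x Ax xrho.
have : `|f x - f x0| <= L * rho `^ a.
  apply: le_trans (Hf x x0 Ax Ax0) _; apply: ler_wpM2l => //.
  apply: ge0_ler_powR => //; rewrite nnegrE ?enorm_ge0 //.
  exact: le_trans (enorm_ge0 _) xrho.
have := ler_normD (f x) (f x0 - f x); rewrite addrC subrK distrC; lra.
Qed.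

End Holder.

Section InnerBallInterpolation.
Variables (R : realType) (n : nat) (lam : {measure set (borel R n) -> \bar R}).
Hypothesis lamE : is_lebesgue lam.
Variables (Omega A' : set (pt R n)) (eps : R).
Hypothesis eps_gt0 : 0 < eps.
Hypothesis OmegaE : Omega = \bigcup_(c in A') cball c eps.
Implicit Types f : pt R n -> R.

Lemma integral_abs_ge_cap f x0 rho d :
  Omega x0 -> 0 < rho -> rho <= eps -> 0 <= d ->
  (forall x, Omega x -> enorm (x - x0) <= rho -> d <= `|f x|) ->
  ((d * (cap_volume_const R n * rho ^+ n))%:E <=
    \int[lam]_(x in (Omega : set (borel R n))) `|f x|%:E)%E.
Proof.
move=> Ox0 rho0 rhoe d0 fge.
have [c A'c x0c] : exists2 c, A' c & cball c eps x0 by move: Ox0; rewrite OmegaE.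
have n1 : 0 < n%:R + 1 :> R by rewrite ltr_wpDl.
set y := x0 - (rho / (2 * eps)) *: (x0 - c); set s := rho / (4 * (n%:R + 1)).
have s_ge0 : 0 <= s by rewrite divr_ge0 ?ltW // mulr_ge0 // ltW.
have capE : cap_volume_const R n * rho ^+ n = (2 * s) ^+ n.
  rewrite /cap_volume_const /s -exprVn -exprMn; congr (_ ^+ _).
  by field; rewrite gt_eqF.
rewrite capE EFinM -(measure_centered_box y lamE s_ge0).
rewrite -integral_cst; last exact: measurable_box.
have sub := centered_box_sub_cap rho0 rhoe x0c.
apply: ge0_le_integral_subset => [x /sub [xc _]|x _|x _|x /sub [xc xx0]] /=.
- by rewrite OmegaE; exists c.
- by rewrite lee_fin.
- by rewrite lee_fin.
- by rewrite lee_fin; apply: fge xx0; rewrite OmegaE; exists c.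
Qed.

Lemma holder_L1_sup_bound f L a H x0 :
  0 < L -> 0 < a -> holder_on Omega f a L ->
  (\int[lam]_(x in (Omega : set (borel R n))) `|f x|%:E <= H%:E)%E ->
  H <= L * cap_volume_const R n * eps `^ (a + n%:R) -> Omega x0 ->
  `|f x0| <= 2 * L / (L * cap_volume_const R n) `^ (a / (a + n%:R))
             * H `^ (a / (a + n%:R)).
Proof.
move=> L0 a0 fH intH H_small Ox0.
set c0 := cap_volume_const R n; set b := a / (a + n%:R); set d := `|f x0|.
have c0_gt0 : 0 < c0 := cap_volume_const_gt0 R n.
have an_gt0 : 0 < a + n%:R by rewrite ltr_wpDr.
have b_gt0 : 0 < b by rewrite divr_gt0.
have Lc0_gt0 : 0 < L * c0 by rewrite mulr_gt0.
have H_ge0 : 0 <= H.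
  by rewrite -lee_fin; apply: le_trans intH; apply: integral_ge0 => x _.
have [->|d_neq0] := eqVneq d 0.
  by rewrite mulr_ge0 ?powR_ge0 // divr_ge0 ?powR_ge0 // mulr_ge0 // ltW.
have d_gt0 : 0 < d by rewrite lt_def d_neq0 normr_ge0.
pose rh := (d / (2 * L)) `^ a^-1.
have rh_gt0 : 0 < rh by rewrite powR_gt0 // divr_gt0 // mulr_gt0.
have Lrh : L * rh `^ a = d / 2.
  rewrite -powRrM mulVf ?gt_eqF // powRr1; last by rewrite divr_ge0 ?ltW // mulr_gt0.
  by field; rewrite gt_eqF.
have capH rho : 0 < rho -> rho <= eps -> rho <= rh -> d / 2 * (c0 * rho ^+ n) <= H.
  move=> rho0 rhoe rhorh; rewrite -lee_fin; apply: le_trans intH.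
  apply: (integral_abs_ge_cap (x0 := x0)) => //; first by rewrite divr_ge0 ?ltW.
  apply: holder_abs_ge_half (ltW a0) (ltW L0) fH Ox0 _.
  rewrite -Lrh ler_pM2l //.
  by apply: ge0_ler_powR => //; rewrite ?nnegrE ltW.
have powRDn z : 0 < z -> z `^ (a + n%:R) = z `^ a * z ^+ n.
  by move=> z0; rewrite powRD ?gt_eqF ?implybT // powR_mulrn ?ltW.
have [rh_le|eps_lt] := lerP rh eps.
- have : L * c0 * rh `^ (a + n%:R) <= H.
    by rewrite powRDn //; have := capH rh rh_gt0 rh_le (lexx _); rewrite -Lrh; lra.
  have lhs_ge0 : 0 <= L * c0 * rh `^ (a + n%:R) by rewrite mulr_ge0 ?powR_ge0 // ltW.
  move=> /(ge0_ler_powR (ltW b_gt0)); rewrite !nnegrE => /(_ lhs_ge0 H_ge0).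
  rewrite powRM ?powR_ge0 ?(ltW Lc0_gt0) // -powRrM.
  have -> : (a + n%:R) * b = a by rewrite /b mulrC divfK // gt_eqF.
  move=> bound.
  have -> : d = 2 * L / (L * c0) `^ b * ((L * c0) `^ b * rh `^ a).
    by rewrite mulrA divfK ?gt_eqF ?powR_gt0 // -mulrA Lrh; field.
  apply: ler_wpM2l bound.
  by rewrite divr_ge0 ?powR_ge0 // mulr_ge0 // ltW.
- have cap_eps := capH eps eps_gt0 (lexx _) (ltW eps_lt).
  have gap : 0 < (d / 2 - L * eps `^ a) * (c0 * eps ^+ n).
    apply: mulr_gt0; last by rewrite mulr_gt0 // exprn_gt0.
    by rewrite subr_gt0 -Lrh ltr_pM2l // gt0_ltr_powR // nnegrE ltW.
  move: H_small; rewrite -/c0 powRDn //; lra.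
Qed.

End InnerBallInterpolation.

Unset Implicit Arguments.

Theorem mainTheorem15 (R : realType) (n : nat)
  (lam : {measure set (borel R n) -> \bar R}) (hlam : is_lebesgue lam)
  (Omega : set (pt R n))
  (hOc : compact Omega) (hOconv : convex_set (Omega : set (convex_lmodType (pt R n)))) (hOint : interior Omega !=set0)
  (hOeps : exists eps : R, 0 < eps /\ inner_ball_property Omega eps)
  (m M p q CH : R) (hm : 0 < m) (hmM : m <= M)
  (hpn : n%:R < p) (hp4 : 4 <= p) (hpq : p^-1 + q^-1 = 1) :
  exists C : R, forall (mu nu : {measure set (borel R n) -> \bar R}) (fmu : pt R n -> R)
    (phi : pt R n -> R) (phiR : R -> pt R n -> R) (h : R -> R),
    is_probability mu -> has_density lam mu fmu -> msupport mu = Omega ->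
    (forall x, Omega x -> m <= fmu x <= M) ->
    is_probability nu -> (exists g, has_density lam nu g) ->
    (\int[nu]_(y in [set: borel R n]) ((enorm y ^+ 2)%:E) < +oo)%E ->
    (\int[nu]_(y in [set: borel R n]) ((enorm y `^ p)%:E) < +oo)%E ->
    brenier Omega mu nu phi ->
    (\int[lam]_(x in (Omega : set (borel R n))) (phi x)%:E = 0)%E ->
    holder_on Omega phi (1 - n%:R / p) CH ->
    (forall r : R, 0 < r -> (0 < nu (oball (0%R : pt R n) r : set (borel R n)))%E ->
       [/\ brenier Omega mu (restr nu r) (phiR r),
           (\int[lam]_(x in (Omega : set (borel R n))) (phiR r x)%:E = 0)%E,
           holder_on Omega (phiR r) (1 - n%:R / p) CH &
           (\int[lam]_(x in (Omega : set (borel R n))) (`|phiR r x - phi x|)%:E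
              <= (h r)%:E)%E]) ->
    h x @[x --> +oo] --> 0 ->
    exists R0 : R, 0 < R0 /\
      forall r, R0 <= r -> forall x, Omega x ->
        `|phiR r x - phi x| <= C * (h r) `^ ((1 - n%:R / p) / (1 + n%:R / q)).
Proof.
have p_gt0 : 0 < p by lra.
set a := 1 - n%:R / p.
have a_gt0 : 0 < a by rewrite subr_gt0 ltr_pdivrMr // mul1r.
have exponentE : a / (1 + n%:R / q) = a / (a + n%:R).
  have q_inv : q^-1 = 1 - p^-1 by lra.
  by rewrite q_inv /a; congr (_ / _); ring.
case: hOeps => eps [eps_gt0 [_ [A' OmegaE]]].
set L := 2 * Num.max CH 1.
have L_gt0 : 0 < L by rewrite mulr_gt0 // lt_max ltr01 orbT.
set c0 := cap_volume_const R n.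
set eta := L * c0 * eps `^ (a + n%:R).
have c0_gt0 : 0 < c0 := cap_volume_const_gt0 R n.
have eta_gt0 : 0 < eta by apply: mulr_gt0; [exact: mulr_gt0 | exact: powR_gt0].
exists (2 * L / (L * c0) `^ (a / (a + n%:R))).
move=> mu nu fmu phi phiR h _ _ _ _ nu1 _ _ _ _ _ phiH phiRP h_cvg.
rewrite exponentE.
have [k [k_gt0 nu_k]] : exists k : R,
    0 < k /\ (0 < nu (oball (0%R : pt R n) k : set (borel R n)))%E.
  by apply: exists_oball_measure_gt0; rewrite nu1.
move: h_cvg => /cvgr_dist_le /(_ eta eta_gt0) [M0 [_ h_small]].
exists (Num.max k (M0 + 1)); split=> [|r]; first by rewrite lt_max k_gt0.
rewrite ge_max => /andP[k_le_r M0_le_r] x0 Ox0.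
have r_gt0 : 0 < r by apply: lt_le_trans k_le_r.
have nu_r : (0 < nu (oball (0%R : pt R n) r : set (borel R n)))%E.
  apply: lt_le_trans nu_k (le_measure _ _ _ _); rewrite ?inE.
  - exact: measurable_oball.
  - exact: measurable_oball.
  - by move=> x; rewrite /oball /=; lra.
have [_ _ phiRH intH] := phiRP r r_gt0 nu_r.
apply: (holder_L1_sup_bound hlam eps_gt0 OmegaE (f := phiR r \- phi)) => //.
- apply: holder_on_le (holder_onB phiRH phiH).
  have CH_le : CH <= Num.max CH 1 by rewrite le_max lexx.
  by rewrite /L; lra.
- apply: le_trans (ler_norm (h r)) _; rewrite -normrN -sub0r.
  by apply: h_small; lra.
Qed.
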